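(* Let $U\subset\mathbb{R}^4$ be a contractible, oriented, relatively compact nonempty open set with coordinates $x^a$, $V\subset\mathbb{R}^{n_s}$ an oriented open set, $\mathcal{J}$ a taming map on $V$ and $(\mathcal{R},\mathcal{I})=\gamma^{-1}(\mathcal{J})$. Let $g$ be a Lorentzian metric on $U$, $\phi\colon U\to V$ smooth, and $\mathcal{V}\in\Omega^2(U,\mathbb{R}^{2n_v})$ with $\ast_g\mathcal{V}=-\mathcal{J}(\phi)\mathcal{V}$; write $\mathcal{V}=(F,G)^t$ with $F=(F^\Lambda)\in\Omega^2(U,\mathbb{R}^{n_v})$. Then for all indices $a,b$, $$2\,\mathcal{I}_{\Lambda\Sigma}(\phi)F^\Lambda_{ac}F^{\Sigma\,c}_{b}-\tfrac12 g_{ab}\,\mathcal{I}_{\Lambda\Sigma}(\phi)F^\Lambda_{cd}F^{\Sigma\,cd}=\omega\big(\mathcal{V}_{ac},\mathcal{J}(\phi)\mathcal{V}_b{}^{c}\big),$$ i.e. the gauge energy momentum tensor $\mathcal{T}(\mathcal{J})(g,\phi,\mathcal{V})$ equals $\omega(\mathcal{V}_{ac},\mathcal{J}\mathcal{V}_b{}^c)\,\mathrm{d}x^a\odot\mathrm{d}x^b$.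
   Context: Indices are raised with $g$ and repeated indices summed. The standard symplectic form $\omega$ on $\mathbb{R}^{2n_v}$ has matrix $\begin{pmatrix}0&-\mathrm{Id}\\ \mathrm{Id}&0\end{pmatrix}$ in the canonical basis. A local electromagnetic structure on $V$ is a pair $(\mathcal{R},\mathcal{I})$ of smooth maps $V\to\mathrm{Sym}(n_v,\mathbb{R})$ with $\mathcal{I}$ pointwise positive definite. A taming map is a smooth $\mathcal{J}\colon V\to\mathrm{Aut}(\mathbb{R}^{2n_v})$ whose values are complex structures $J$ with $\omega(J\cdot,J\cdot)=\omega$ and $\omega(\xi,J\xi)>0$ for $\xi\ne0$. The bijection $\gamma$ from local electromagnetic structures to taming maps sends $(\mathcal{R},\mathcal{I})$ to $\begin{pmatrix}-\mathcal{I}^{-1}\mathcal{R} & \mathcal{I}^{-1}\\ -\mathcal{I}-\mathcal{R}\mathcal{I}^{-1}\mathcal{R} & \mathcal{R}\mathcal{I}^{-1}\end{pmatrix}$. We write $\mathcal{J}(\phi)=\mathcal{J}\circ\phi$, $\mathcal{I}(\phi)=\mathcal{I}\circ\phi$, and $\ast_g$ is the Hodge star of $g$ and the orientation of $U$. *)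

From HB Require Import structures.
From mathcomp Require Import all_boot all_order all_algebra.
From mathcomp Require Import all_classical all_reals all_analysis.
Set Implicit Arguments.
Unset Strict Implicit.
Unset Printing Implicit Defensive.
Import Order.TTheory GRing.Theory Num.Theory.
Import numFieldNormedType.Exports.
Local Open Scope classical_set_scope.
Local Open Scope ring_scope.

Section Defs.
Variable R : realType.

Fixpoint smooth_order (m : nat) (U : set 'rV[R]_m) (k : nat)
  (f : 'rV[R]_m -> R) : Prop :=
  match k with
  | 0 => forall x, U x -> {for x, continuous f}
  | k'.+1 => (forall x, U x -> forall v, derivable f x v) /\
             (forall v, smooth_order U k' (fun x => derive f x v))
  end.

Definition smooth_on (m : nat) (U : set 'rV[R]_m) (f : 'rV[R]_m -> R) :=
  forall k, smooth_order U k f.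

Definition smooth_mx_on (m p q : nat) (U : set 'rV[R]_m)
  (f : 'rV[R]_m -> 'M[R]_(p, q)) :=
  forall i j, smooth_on U (fun x => f x i j).

Definition contractible (m : nat) (U : set 'rV[R]_m) : Prop :=
  exists x0, U x0 /\
  exists H : R * 'rV[R]_m -> 'rV[R]_m,
    {within `[0, 1] `*` U, continuous H} /\
    (forall t x, 0 <= t <= 1 -> U x -> U (H (t, x))) /\
    (forall x, U x -> H (0, x) = x) /\
    (forall x, U x -> H (1, x) = x0).

Definition relatively_compact (m : nat) (U : set 'rV[R]_m) :=
  compact (closure U).

Definition minkowski : 'M[R]_4 :=
  \matrix_(i, j) (if i == j then (if i == 0 then -1 else 1) else 0).

Definition lorentzian_form (G : 'M[R]_4) : Prop :=
  G^T = G /\ exists P : 'M[R]_4, P \in unitmx /\ P^T *m G *m P = minkowski.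

Definition lorentzian_metric (U : set 'rV[R]_4) (g : 'rV[R]_4 -> 'M[R]_4) :=
  smooth_mx_on U g /\ forall x, U x -> lorentzian_form (g x).

(* Levi-Civita symbol: sign of (a b c d) as a map of 'I_4, 0 if not injective *)
Definition levi (a b c d : 'I_4) : R :=
  \det (\matrix_(i < 4, j < 4) ((tnth [tuple a; b; c; d] i == j)%:R : R)).

(* a 2-form valued in a space of column vectors at a point: its components *)
Definition form2 (k : nat) := 'I_4 -> 'I_4 -> 'cV[R]_k.

Definition antisym (k : nat) (V : form2 k) := forall a b, V a b = - V b a.

(* Hodge star of a 2-form for the metric G and the orientation
   (-1)^o times the standard orientation of R^4 :
   ( *F)_{ab} = 1/2 sqrt|det G| eps_{abcd} G^{ce} G^{df} F_{ef} *)
Definition hodge2 (o : bool) (G : 'M[R]_4) (k : nat) (V : form2 k) : form2 k :=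
  fun a b => ((-1) ^+ o * Num.sqrt `|\det G| / 2) *:
    \sum_(c < 4) \sum_(d < 4) \sum_(e < 4) \sum_(f < 4)
      (levi a b c d * invmx G c e * invmx G d f) *: V e f.

Definition Omega (nv : nat) : 'M[R]_(nv + nv) :=
  block_mx 0 (- 1%:M) 1%:M 0.

Definition omega (nv : nat) (xi eta : 'cV[R]_(nv + nv)) : R :=
  (xi^T *m Omega nv *m eta) 0 0.

Definition taming_cs (nv : nat) (J : 'M[R]_(nv + nv)) : Prop :=
  J *m J = - 1%:M /\
  (forall xi eta, omega (J *m xi) (J *m eta) = omega xi eta) /\
  (forall xi, xi != 0 -> 0 < omega xi (J *m xi)).

Definition taming_map (ns nv : nat) (Vs : set 'rV[R]_ns)
  (J : 'rV[R]_ns -> 'M[R]_(nv + nv)) : Prop :=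
  smooth_mx_on Vs J /\ (forall y, Vs y -> J y \in unitmx /\ taming_cs (J y)).

Definition pos_def (nv : nat) (A : 'M[R]_nv) : Prop :=
  forall u : 'cV[R]_nv, u != 0 -> 0 < (u^T *m A *m u) 0 0.

Definition em_structure (ns nv : nat) (Vs : set 'rV[R]_ns)
  (Rm Im : 'rV[R]_ns -> 'M[R]_nv) : Prop :=
  smooth_mx_on Vs Rm /\ smooth_mx_on Vs Im /\
  (forall y, Vs y -> (Rm y)^T = Rm y /\ (Im y)^T = Im y /\ pos_def (Im y)).

Definition gamma_mx (nv : nat) (Rr Ii : 'M[R]_nv) : 'M[R]_(nv + nv) :=
  block_mx (- (invmx Ii *m Rr)) (invmx Ii)
           (- Ii - Rr *m invmx Ii *m Rr) (Rr *m invmx Ii).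

Definition raise2 (G : 'M[R]_4) (k : nat) (V : form2 k) : form2 k :=
  fun a c => \sum_(d < 4) invmx G d c *: V a d.

Definition raise_both (G : 'M[R]_4) (k : nat) (V : form2 k) : form2 k :=
  fun c d => \sum_(e < 4) \sum_(f < 4) (invmx G c e * invmx G d f) *: V e f.

Definition Fpart (nv : nat) (V : form2 (nv + nv)) : 'I_4 -> 'I_4 -> 'I_nv -> R :=
  fun a b L => usubmx (V a b) L 0.

End Defs.

From Pilot Require Import Defs.
From HB Require Import structures.
From mathcomp Require Import all_boot all_order all_algebra perm.
From mathcomp Require Import all_classical all_reals all_analysis.
From mathcomp Require Import ring lra.
Set Implicit Arguments.
Unset Strict Implicit.
Unset Printing Implicit Defensive.
Import Order.TTheory GRing.Theory Num.Theory.
Import numFieldNormedType.Exports.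
Local Open Scope classical_set_scope.
Local Open Scope ring_scope.

(* Write V = (F, G) and *F for the Hodge dual of F.  Since J = gamma(R, I), the duality
   *V = - J V gives G = R F - I *F, and as R and I are symmetric this turns
   omega(V_ac, J V_b^c) into I_{LS} (F^L_{ac} F^S_b^c + ( *F^L)_{ac} ( *F^S)_b^c).
   In Lorentzian signature ( *X)_{ac} ( *Y)_b^c = Y_{ac} X_b^c - 1/2 g_{ab} X_{cd} Y^{cd}
   for 2-forms X, Y, and the symmetry of I then gives the left-hand side.  This identity
   is reduced to Minkowski space by a frame P with P^T g P = eta: the Levi-Civita symbol
   scales by det P, whose square cancels against |det g| / 4, and for eta it is a finite
   computation. *)

Definition i0 : 'I_4 := @Ordinal 4 0 isT.
Definition i1 : 'I_4 := @Ordinal 4 1 isT.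
Definition i2 : 'I_4 := @Ordinal 4 2 isT.
Definition i3 : 'I_4 := @Ordinal 4 3 isT.

Lemma ord4_ind (P : 'I_4 -> Prop) : P i0 -> P i1 -> P i2 -> P i3 -> forall i, P i.
Proof.
move=> P0 P1 P2 P3 [[|[|[|[|//]]]] lt_i4].
- by rewrite (_ : Ordinal lt_i4 = i0) //; apply: val_inj.
- by rewrite (_ : Ordinal lt_i4 = i1) //; apply: val_inj.
- by rewrite (_ : Ordinal lt_i4 = i2) //; apply: val_inj.
- by rewrite (_ : Ordinal lt_i4 = i3) //; apply: val_inj.
Qed.

Lemma big_ord4 (T : Type) (idx : T) (op : Monoid.law idx) (F : 'I_4 -> T) :
  \big[op/idx]_i F i = op (op (op (F i0) (F i1)) (F i2)) (F i3).
Proof. by rewrite !big_ord_recr big_ord0 Monoid.mul1m; do 4 f_equal; apply: val_inj. Qed.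

Lemma big_ffun_ord4 (T : Type) (idx : T) (op : Monoid.com_law idx)
    (F : 'I_4 -> 'I_4 -> 'I_4 -> 'I_4 -> T) :
  \big[op/idx]_(f : 'I_4 ^ 4) F (f i0) (f i1) (f i2) (f i3) =
  \big[op/idx]_i \big[op/idx]_j \big[op/idx]_k \big[op/idx]_l F i j k l.
Proof.
pose tf (p : ('I_4 * 'I_4) * ('I_4 * 'I_4)) : 'I_4 ^ 4 :=
  [ffun m => tnth [tuple p.1.1; p.1.2; p.2.1; p.2.2] m].
symmetry; rewrite pair_big; under eq_bigr do rewrite pair_big.
rewrite pair_big (reindex tf) /=; last first.
  exists (fun f : 'I_4 ^ 4 => ((f i0, f i1), (f i2, f i3))).
    by move=> [[? ?] [? ?]] _; rewrite /tf !ffunE.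
  by move=> f _; apply/ffunP; apply: ord4_ind; rewrite /tf !ffunE.
by apply: eq_bigr => [[[? ?] [? ?]]] _; rewrite /tf !ffunE.
Qed.

Section DoubleSums.
Variables (R : comPzRingType) (I1 I2 I3 I4 : finType).

Lemma mulr_sum2l (F : I1 -> I2 -> R) x :
  (\sum_i \sum_j F i j) * x = \sum_i \sum_j F i j * x.
Proof. by rewrite mulr_suml; apply: eq_bigr => i _; rewrite mulr_suml. Qed.

Lemma mulr_sum2r (F : I1 -> I2 -> R) x :
  x * (\sum_i \sum_j F i j) = \sum_i \sum_j x * F i j.
Proof. by rewrite mulr_sumr; apply: eq_bigr => i _; rewrite mulr_sumr. Qed.

Lemma exchange_big2 (F : I1 -> I2 -> I3 -> I4 -> R) :
  \sum_i \sum_j \sum_k \sum_l F i j k l = \sum_k \sum_l \sum_i \sum_j F i j k l.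
Proof.
under eq_bigr do under eq_bigr do rewrite pair_big /=.
rewrite pair_big /= exchange_big /=.
under [RHS]eq_bigr do under eq_bigr do rewrite pair_big /=.
by rewrite [RHS]pair_big /=; apply: eq_bigr => -[k l] _; apply: eq_bigr.
Qed.

End DoubleSums.

Lemma trmx_oppE (R : zmodType) n (A : 'M[R]_n) : A^T = - A -> forall i j, A i j = - A j i.
Proof. by move=> trA i j; have := congr1 (fun M : 'M[R]_n => M j i) trA; rewrite !mxE. Qed.

Section MatrixEntries.
Variables (R : comPzRingType) (n : nat).

Lemma mulmx_trmx_entry (P N : 'M[R]_n) c d :
  (P *m N *m P^T) c d = \sum_e \sum_f P c e * P d f * N e f.
Proof.
rewrite !mxE; under eq_bigr => j _ do rewrite !mxE mulr_suml.
by rewrite exchange_big; apply: eq_bigr => e _; apply: eq_bigr => f _; ring.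
Qed.

Lemma mulmx_trmx2_entry (X H Y : 'M[R]_n) a b :
  (X *m H^T *m Y^T) a b = \sum_c \sum_d H d c * X a c * Y b d.
Proof.
rewrite mxE; under eq_bigr => d _ do rewrite mxE [Y^T _ _]mxE mulr_suml.
rewrite exchange_big; apply: eq_bigr => c _; apply: eq_bigr => d _.
by rewrite mxE; ring.
Qed.

Lemma det_mulmx_sum_ffun (A B : 'M[R]_n) :
  \det (A *m B) =
  \sum_(f : 'I_n ^ n) \det (\matrix_(i, j) B (f i) j) * \prod_i A i (f i).
Proof.
pose AB s i j := A i j * B j (s i).
transitivity (\sum_(f : 'I_n ^ n) \sum_(s : 'S_n) (-1) ^+ s * \prod_i AB s i (f i)).
  rewrite exchange_big; apply: eq_bigr => /= s _; rewrite -big_distrr /=.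
  congr (_ * _); rewrite -(bigA_distr_bigA (AB s)) /=.
  by apply: eq_bigr => i _; rewrite mxE.
apply: eq_bigr => f _; rewrite mulrC big_distrr /=; apply: eq_bigr => s _.
rewrite mulrCA big_split //=; congr (_ * (_ * _)).
by apply: eq_bigr => i _; rewrite mxE.
Qed.

Lemma sum_mul_entries_conj (P X Z : 'M[R]_n) :
  \sum_c \sum_d X c d * (P *m Z *m P^T) c d = \sum_c \sum_d (P^T *m X *m P) c d * Z c d.
Proof.
have trE (A B : 'M[R]_n) : \sum_c \sum_d A c d * B c d = \tr (A *m B^T).
  by apply: eq_bigr => c _; rewrite mxE; apply: eq_bigr => d _; rewrite mxE.
by rewrite !trE !trmx_mul trmxK !mulmxA mxtrace_mulC !mulmxA.
Qed.

End MatrixEntries.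

Section LeviCivita.
Variable R : realType.
Notation levi := (@levi R).

Ltac levi_swap_by i j :=
  rewrite /levi; let M := fresh "M" in set M := \matrix_(_, _) _;
  rewrite (_ : \matrix_(_, _) _ = xrow i j M);
  [ by rewrite xrowE det_mulmx det_perm odd_tperm /= expr1 mulN1r opprK
  | by apply/matrixP; apply: ord4_ind => k; rewrite /xrow /row_perm !mxE
         ?tpermL ?tpermR ?tpermD ].

Lemma levi_swap01 a b c d : levi b a c d = - levi a b c d.
Proof. levi_swap_by i0 i1. Qed.
Lemma levi_swap12 a b c d : levi a c b d = - levi a b c d.
Proof. levi_swap_by i1 i2. Qed.
Lemma levi_swap23 a b c d : levi a b d c = - levi a b c d.
Proof. levi_swap_by i2 i3. Qed.

Ltac levi_rep_by i j :=
  rewrite /levi; apply: (determinant_alternate (i1 := i) (i2 := j)) => // k;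
  by rewrite !mxE.

Lemma levi_rep01 a c d : levi a a c d = 0. Proof. levi_rep_by i0 i1. Qed.
Lemma levi_rep02 a b d : levi a b a d = 0. Proof. levi_rep_by i0 i2. Qed.
Lemma levi_rep03 a b c : levi a b c a = 0. Proof. levi_rep_by i0 i3. Qed.
Lemma levi_rep12 a b d : levi a b b d = 0. Proof. levi_rep_by i1 i2. Qed.
Lemma levi_rep13 a b c : levi a b c b = 0. Proof. levi_rep_by i1 i3. Qed.
Lemma levi_rep23 a b c : levi a b c c = 0. Proof. levi_rep_by i2 i3. Qed.

Lemma levi0123 : levi i0 i1 i2 i3 = 1.
Proof.
rewrite /levi (_ : \matrix_(_, _) _ = 1%:M) ?det1 //.
by apply/matrixP; apply: ord4_ind => k; rewrite !mxE.
Qed.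

(* The sign is the parity of the number of inversions of (a, b, c, d). *)
Definition levi_nat (a b c d : nat) : R :=
  if [|| a == b, a == c, a == d, b == c, b == d | c == d]%N then 0
  else (-1) ^+ ((b < a) (+) (c < a) (+) (d < a) (+) (c < b) (+) (d < b) (+) (d < c))%N.

Lemma leviE a b c d : levi a b c d = levi_nat a b c d.
Proof.
elim/ord4_ind: a; elim/ord4_ind: b; elim/ord4_ind: c; elim/ord4_ind: d;
rewrite /levi_nat /= ?levi_rep01 ?levi_rep02 ?levi_rep03 ?levi_rep12 ?levi_rep13
  ?levi_rep23 //;
repeat (progress rewrite ?(levi_swap01 i0 i1) ?(levi_swap01 i0 i2) ?(levi_swap01 i0 i3)
   ?(levi_swap01 i1 i2) ?(levi_swap01 i1 i3) ?(levi_swap01 i2 i3)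
   ?(levi_swap12 _ i0 i1) ?(levi_swap12 _ i0 i2) ?(levi_swap12 _ i0 i3)
   ?(levi_swap12 _ i1 i2) ?(levi_swap12 _ i1 i3) ?(levi_swap12 _ i2 i3)
   ?(levi_swap23 _ _ i0 i1) ?(levi_swap23 _ _ i0 i2) ?(levi_swap23 _ _ i0 i3)
   ?(levi_swap23 _ _ i1 i2) ?(levi_swap23 _ _ i1 i3) ?(levi_swap23 _ _ i2 i3));
by rewrite levi0123 ?opprK ?expr0 ?expr1.
Qed.

Lemma levi_change_basis (P : 'M[R]_4) a b e f :
  \sum_i \sum_j \sum_k \sum_l levi i j k l * (P i a * P j b * P k e * P l f)
  = \det P * levi a b e f.
Proof.
pose t := [tuple a; b; e; f].
have -> : \det P * levi a b e f = \det (\matrix_(k, m) P m (tnth t k)).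
  rewrite /levi -(det_tr P) mulrC -det_mulmx; congr (\det _).
  apply/matrixP => k m; rewrite !mxE (bigD1 (tnth t k)) //= !mxE (eqxx (tnth t k)) mul1r.
  by rewrite big1 ?addr0 // => j /negbTE; rewrite !mxE eq_sym => ->; rewrite mul0r.
rewrite -[\matrix_(_, _) _]mulmx1 det_mulmx_sum_ffun.
rewrite -(@big_ffun_ord4 _ 0 +%R (fun i j k l => levi i j k l * (P i a * P j b * P k e * P l f))).
apply: eq_bigr => g _; rewrite big_ord4 !mxE /=; congr (_ * _).
by rewrite /levi; congr (\det _); apply/matrixP => k m; rewrite !mxE; elim/ord4_ind: k.
Qed.

Definition levi_mx (N : 'M[R]_4) : 'M[R]_4 :=
  \matrix_(a, b) \sum_c \sum_d levi a b c d * N c d.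

Lemma levi_mx_congr (P N : 'M[R]_4) :
  P^T *m levi_mx (P *m N *m P^T) *m P = \det P *: levi_mx N.
Proof.
apply/matrixP => a b; rewrite !mxE.
have levi_mxE i j : levi_mx (P *m N *m P^T) i j =
    \sum_e \sum_f (\sum_c \sum_d levi i j c d * (P c e * P d f)) * N e f.
  rewrite mxE; under eq_bigr do under eq_bigr do rewrite mulmx_trmx_entry mulr_sum2r.
  rewrite exchange_big2; apply: eq_bigr => e _; apply: eq_bigr => f _.
  by rewrite mulr_sum2l; apply: eq_bigr => c _; apply: eq_bigr => d _; ring.
transitivity (\sum_i \sum_j P i a * P j b * levi_mx (P *m N *m P^T) i j).
  rewrite exchange_big; apply: eq_bigr => j _; rewrite mxE mulr_suml.
  by apply: eq_bigr => i _; rewrite !mxE; ring.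
under eq_bigr do under eq_bigr do rewrite levi_mxE mulr_sum2r.
rewrite exchange_big2 mulr_sum2r; apply: eq_bigr => e _; apply: eq_bigr => f _.
rewrite mulrA -levi_change_basis mulr_sum2l; apply: eq_bigr => i _; apply: eq_bigr => j _.
rewrite mulrA mulr_sum2r mulr_sum2l [RHS]mulr_sum2l.
by apply: eq_bigr => c _; apply: eq_bigr => d _; ring.
Qed.

End LeviCivita.

Section Minkowski.
Variable R : realType.
Notation eta := (@Defs.minkowski R).
Notation levi := (@levi R).
Notation levi_mx := (@levi_mx R).

Definition msign (i : 'I_4) : R := if i == i0 then -1 else 1.

Lemma minkowskiE i j : eta i j = if i == j then msign i else 0.
Proof. by elim/ord4_ind: i; elim/ord4_ind: j; rewrite !mxE. Qed.

Lemma mulmx_minkowskiE (A : 'M[R]_4) i j : (A *m eta) i j = A i j * msign j.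
Proof. by rewrite mxE big_ord4 !minkowskiE; elim/ord4_ind: j => /=; ring. Qed.

Lemma minkowski_mulmxE (A : 'M[R]_4) i j : (eta *m A) i j = msign i * A i j.
Proof. by rewrite mxE big_ord4 !minkowskiE; elim/ord4_ind: i => /=; ring. Qed.

Lemma trmx_minkowski : eta^T = eta.
Proof.
by apply/matrixP => i j; rewrite mxE !minkowskiE; elim/ord4_ind: i; elim/ord4_ind: j.
Qed.

Lemma minkowski_mulmx_id : eta *m eta = 1%:M.
Proof.
apply/matrixP => i j; rewrite mulmx_minkowskiE minkowskiE !mxE.
by elim/ord4_ind: i; elim/ord4_ind: j; rewrite /msign /=; ring.
Qed.

Lemma det_minkowski : \det eta = -1.
Proof.
have -> : eta = diag_mx (\row_i msign i).
  by apply/matrixP => i j; rewrite minkowskiE !mxE; elim/ord4_ind: i; elim/ord4_ind: j.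
by rewrite det_diag big_ord4 !mxE /msign /=; ring.
Qed.

Lemma levi_minkowski_contract_entry (X Y : 'M[R]_4) :
  (forall i j, X i j = - X j i) -> (forall i j, Y i j = - Y j i) -> forall a b,
  4^-1 * \sum_m (\sum_c \sum_d levi a m c d * (msign c * msign d * X c d)) * msign m *
      (\sum_c \sum_d levi b m c d * (msign c * msign d * Y c d))
  = \sum_m Y a m * msign m * X b m
    - 2^-1 * (\sum_c \sum_d X c d * (msign c * msign d * Y c d)) *
      (if a == b then msign a else 0).
Proof.
move=> antiX antiY a b.
have X0 i : X i i = 0 by have := antiX i i; lra.
have Y0 i : Y i i = 0 by have := antiY i i; lra.
have -> : levi = @levi_nat R.
  by do 4 (apply/funext => ?); exact: leviE.
elim/ord4_ind: a; elim/ord4_ind: b; rewrite !big_ord4 /levi_nat /msign /=;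
rewrite ?X0 ?Y0 (antiX i1 i0) (antiX i2 i0) (antiX i3 i0) (antiX i2 i1) (antiX i3 i1)
  (antiX i3 i2) (antiY i1 i0) (antiY i2 i0) (antiY i3 i0) (antiY i2 i1) (antiY i3 i1)
  (antiY i3 i2);
by field.
Qed.

Lemma levi_mx_minkowski_contract (X Y : 'M[R]_4) : X^T = - X -> Y^T = - Y ->
  4^-1 *: (levi_mx (eta *m X *m eta) *m eta *m (levi_mx (eta *m Y *m eta))^T)
  = Y *m eta *m X^T - (2^-1 * \sum_c \sum_d X c d * (eta *m Y *m eta) c d) *: eta.
Proof.
move=> trX trY.
have antiX := trmx_oppE trX.
have antiY := trmx_oppE trY.
have levi_mxE (Z : 'M[R]_4) a m : levi_mx (eta *m Z *m eta) a m =
    \sum_c \sum_d levi a m c d * (msign c * msign d * Z c d).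
  rewrite mxE; apply: eq_bigr => c _; apply: eq_bigr => d _.
  by rewrite mulmx_minkowskiE minkowski_mulmxE; ring.
apply/matrixP => a b; rewrite [LHS]mxE [X in 4^-1 * X]mxE.
under eq_bigr do rewrite mulmx_minkowskiE [_^T _ _]mxE !levi_mxE.
rewrite [in RHS]mxE [X in _ = X + _]mxE [X in _ = _ + X]mxE [X in _ = _ - X]mxE.
rewrite minkowskiE (levi_minkowski_contract_entry antiX antiY); congr (_ - _ * _ * _).
  by apply: eq_bigr => j _; rewrite mulmx_minkowskiE mxE.
apply: eq_bigr => c _; apply: eq_bigr => d _.
by rewrite mulmx_minkowskiE minkowski_mulmxE; congr (_ * _); ring.
Qed.

End Minkowski.

Section Lorentzian.
Variable R : realType.
Notation eta := (@Defs.minkowski R).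
Notation levi_mx := (@levi_mx R).

Definition hodge_mx (o : bool) (G X : 'M[R]_4) : 'M[R]_4 :=
  ((-1) ^+ o * Num.sqrt `|\det G| / 2) *: levi_mx (invmx G *m X *m (invmx G)^T).

Variables (G P : 'M[R]_4).
Hypotheses (P_unit : P \in unitmx) (P_frame : P^T *m G *m P = eta).

Local Notation Q := (invmx P).

Lemma lorentzian_frameE : G = Q^T *m eta *m Q.
Proof.
by rewrite -P_frame !mulmxA -trmx_mul mulmxV // trmx1 mul1mx -mulmxA mulmxV ?mulmx1.
Qed.

Lemma invmx_lorentzian : invmx G = P *m eta *m P^T.
Proof.
have GH : G *m (P *m eta *m P^T) = 1%:M.
  rewrite lorentzian_frameE !mulmxA -(mulmxA _ Q P) mulVmx // mulmx1.
  by rewrite -(mulmxA _ eta eta) minkowski_mulmx_id mulmx1 -trmx_mul mulmxV ?trmx1.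
by rewrite -[LHS]mulmx1 -GH mulKmx // (mulmx1_unit GH).1.
Qed.

Lemma hodge_mx_frame o X :
  hodge_mx o G X = ((-1) ^+ o * Num.sqrt `|\det G| / 2 * \det P) *:
    (Q^T *m levi_mx (eta *m (P^T *m X *m P) *m eta) *m Q).
Proof.
rewrite /hodge_mx invmx_lorentzian !trmx_mul trmxK trmx_minkowski -[in RHS]scalerA; congr (_ *: _).
have -> : P *m eta *m P^T *m X *m (P *m (eta *m P^T))
         = P *m (eta *m (P^T *m X *m P) *m eta) *m P^T by rewrite !mulmxA.
rewrite scalemxAl scalemxAr -levi_mx_congr.
by rewrite !mulmxA -trmx_mul mulmxV // trmx1 mul1mx mulmxK.
Qed.

Lemma hodge_scale_sqr o :
  ((-1) ^+ o * Num.sqrt `|\det G| / 2 * \det P) ^+ 2 = 4^-1.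
Proof.
have detG : \det G * \det P ^+ 2 = -1.
  by rewrite -det_minkowski -P_frame !det_mulmx det_tr; ring.
have detG_le0 : \det G <= 0 by have := sqr_ge0 (\det P); nra.
have sign_sqr : ((-1) ^+ o) ^+ 2 = 1 :> R.
  by rewrite -exprM mulnC exprM sqrrN !expr1n.
rewrite !exprMn sign_sqr sqr_sqrtr ?normr_ge0 // ler0_norm //.
transitivity (- (\det G * \det P ^+ 2) / 4); first by field.
by rewrite detG opprK mul1r.
Qed.

Lemma hodge_mx_contract o X Y : X^T = - X -> Y^T = - Y ->
  hodge_mx o G X *m (invmx G)^T *m (hodge_mx o G Y)^T
  = Y *m (invmx G)^T *m X^T
    - (2^-1 * \sum_c \sum_d X c d * (invmx G *m Y *m (invmx G)^T) c d) *: G.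
Proof.
move=> trX trY.
have QP : Q *m P = 1%:M by rewrite mulVmx.
have PQ : P *m Q = 1%:M by rewrite mulmxV.
have trQP : P^T *m Q^T = 1%:M by rewrite -trmx_mul QP trmx1.
have trPQ : Q^T *m P^T = 1%:M by rewrite -trmx_mul PQ trmx1.
have trH : (invmx G)^T = invmx G.
  by rewrite invmx_lorentzian !trmx_mul trmxK trmx_minkowski mulmxA.
have cgrK A : Q^T *m (P^T *m A *m P) *m Q = A.
  by rewrite !mulmxA trPQ mul1mx -mulmxA PQ mulmx1.
have cgr_mul A B : (Q^T *m A *m Q) *m (P *m eta *m P^T) *m (Q^T *m B *m Q)
    = Q^T *m (A *m eta *m B) *m Q.
  rewrite !mulmxA -(mulmxA _ Q P) QP mulmx1.
  by rewrite -(mulmxA _ P^T Q^T) trQP mulmx1.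
have trcgr A : (Q^T *m A *m Q)^T = Q^T *m A^T *m Q by rewrite !trmx_mul trmxK mulmxA.
have cgr_anti A : A^T = - A -> (P^T *m A *m P)^T = - (P^T *m A *m P).
  by move=> trA; rewrite !trmx_mul trmxK trA mulNmx mulmxN mulmxA.
set X' := P^T *m X *m P; set Y' := P^T *m Y *m P.
have -> : \sum_c \sum_d X c d * (invmx G *m Y *m (invmx G)^T) c d
        = \sum_c \sum_d X' c d * (eta *m Y' *m eta) c d.
  rewrite trH invmx_lorentzian -sum_mul_entries_conj.
  by congr (\sum_c \sum_d _ * _); rewrite !mulmxA.
rewrite !hodge_mx_frame trH invmx_lorentzian linearZ /= -!scalemxAl -scalemxAr scalerA.
rewrite -expr2 hodge_scale_sqr trcgr cgr_mul scalemxAl scalemxAr.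
rewrite (levi_mx_minkowski_contract (cgr_anti _ trX) (cgr_anti _ trY)) -/X' -/Y'.
have XE : X^T = Q^T *m X'^T *m Q by rewrite /X' !trmx_mul trmxK mulmxA cgrK.
rewrite XE -[Y]cgrK -/Y' cgr_mul [in RHS]lorentzian_frameE.
by rewrite mulmxBr mulmxBl -scalemxAr -scalemxAl.
Qed.

End Lorentzian.

Section Symplectic.
Variables (R : realType) (nv : nat).
Notation omega := (@Defs.omega R nv).

Lemma omega_col_mx (p1 p2 q1 q2 : 'cV[R]_nv) :
  omega (col_mx p1 p2) (col_mx q1 q2) = (p2^T *m q1 - p1^T *m q2) 0 0.
Proof.
rewrite /omega /Omega tr_col_mx mul_row_block !mul_row_col.
by rewrite !mulmx0 !mulmx1 add0r addr0 mulmxN mulmx1 mulNmx addrC.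
Qed.

Lemma omega_sumr (I : finType) xi (s : I -> R) (eta : I -> 'cV[R]_(nv + nv)) :
  omega xi (\sum_d s d *: eta d) = \sum_d s d * omega xi (eta d).
Proof.
rewrite /omega mulmx_sumr summxE; apply: eq_bigr => d _.
by rewrite -scalemxAr mxE.
Qed.

Lemma bilinear_entry (A : 'M[R]_nv) (p q : 'cV[R]_nv) :
  (p^T *m A *m q) 0 0 = \sum_L \sum_M A L M * (p L 0 * q M 0).
Proof.
rewrite mxE exchange_big; apply: eq_bigr => M _; rewrite !mxE mulr_suml.
by apply: eq_bigr => L _; rewrite !mxE; ring.
Qed.

Lemma pos_def_unitmx (A : 'M[R]_nv) : pos_def A -> A \in unitmx.
Proof.
move=> posA; rewrite unitmxE unitfE; apply/negP => /det0P [v v_neq0 vA].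
by have := posA v^T; rewrite trmx_eq0 v_neq0 trmxK vA mul0mx mxE ltxx => /(_ isT).
Qed.

Variables (Rr Ii : 'M[R]_nv).
Hypotheses (Rr_sym : Rr^T = Rr) (Ii_sym : Ii^T = Ii) (Ii_unit : Ii \in unitmx).
Local Notation J := (gamma_mx Rr Ii).

(* With [f, hf] the upper blocks of [xi] and [J xi], the lower blocks are
   [Rr f + Ii hf] for [xi] and [- Ii f + Rr hf] for [J xi]. *)
Lemma omega_gamma xi eta :
  omega xi (J *m eta) =
  ((usubmx xi)^T *m Ii *m usubmx eta
   + (usubmx (J *m xi))^T *m Ii *m usubmx (J *m eta)) 0 0.
Proof.
have lowerE (zeta : 'cV[R]_(nv + nv)) :
    dsubmx zeta = Rr *m usubmx zeta + Ii *m usubmx (J *m zeta)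
    /\ dsubmx (J *m zeta) = - (Ii *m usubmx zeta) + Rr *m usubmx (J *m zeta).
  set f := usubmx zeta; set g := dsubmx zeta.
  have JzE : J *m zeta = col_mx (- (invmx Ii *m Rr) *m f + invmx Ii *m g)
                                ((- Ii - Rr *m invmx Ii *m Rr) *m f + Rr *m invmx Ii *m g).
    by rewrite -[zeta in LHS]vsubmxK /gamma_mx mul_block_col.
  have hfE : usubmx (J *m zeta) = invmx Ii *m (g - Rr *m f).
    by rewrite JzE col_mxKu mulmxBr mulNmx mulmxA addrC.
  rewrite hfE mulmxA mulmxV // mul1mx addrC subrK; split=> //.
  rewrite JzE col_mxKd !mulmxBr mulmxBl mulNmx !mulmxA.
  by rewrite [RHS]addrA addrAC.
rewrite -[xi in LHS]vsubmxK -[J *m eta in LHS]vsubmxK omega_col_mx.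
have [-> _] := lowerE xi; have [_ ->] := lowerE eta.
congr (_ 0 0); rewrite linearD /= !trmx_mul Rr_sym Ii_sym mulmxDl mulmxDr mulmxN !mulmxA.
by rewrite opprD opprK addrC addrA subrK.
Qed.

End Symplectic.

Section FormComponents.
Variables (R : realType) (k : nat) (G : 'M[R]_4).

Definition form2_mx (W : form2 R k) (i : 'I_k) : 'M[R]_4 := \matrix_(a, b) W a b i 0.

Lemma form2_mx_raise2 W i : form2_mx (raise2 G W) i = form2_mx W i *m invmx G.
Proof.
apply/matrixP => a c; rewrite !mxE /raise2 summxE; apply: eq_bigr => d _.
by rewrite !mxE mulrC.
Qed.

Lemma form2_mx_raise_both W i :
  form2_mx (raise_both G W) i = invmx G *m form2_mx W i *m (invmx G)^T.
Proof.
apply/matrixP => c d; rewrite mulmx_trmx_entry mxE /raise_both summxE.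
by apply: eq_bigr => e _; rewrite summxE; apply: eq_bigr => f _; rewrite !mxE.
Qed.

Lemma form2_mx_hodge2 o W i : form2_mx (hodge2 o G W) i = hodge_mx o G (form2_mx W i).
Proof.
apply/matrixP => a b; rewrite /hodge2 /hodge_mx !mxE summxE; congr (_ * _).
apply: eq_bigr => c _; rewrite summxE; apply: eq_bigr => d _.
rewrite mulmx_trmx_entry mulr_sum2r summxE; apply: eq_bigr => e _.
by rewrite summxE; apply: eq_bigr => f _; rewrite !mxE; ring.
Qed.

Lemma form2_mx_antisym W i : antisym W -> (form2_mx W i)^T = - form2_mx W i.
Proof. by move=> antiW; apply/matrixP => a b; rewrite !mxE antiW mxE. Qed.

End FormComponents.

Section EnergyMomentum.
Variables (R : realType) (nv : nat) (G : 'M[R]_4) (Rr Ii : 'M[R]_nv).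
Hypotheses (Rr_sym : Rr^T = Rr) (Ii_sym : Ii^T = Ii) (Ii_unit : Ii \in unitmx).
Local Notation J := (gamma_mx Rr Ii).
Local Notation F W L := (form2_mx W (lshift nv L)).

Lemma sum_omega_raise2 (W Z : form2 R (nv + nv)) a b :
  (forall a b, Z a b = - (J *m W a b)) ->
  \sum_c omega (W a c) (J *m raise2 G W b c)
  = \sum_L \sum_M Ii L M * ((F W L *m (invmx G)^T *m (F W M)^T) a b
                           + (F Z L *m (invmx G)^T *m (F Z M)^T) a b).
Proof.
move=> ZE.
have JW c d : J *m W c d = - Z c d by rewrite ZE opprK.
have omegaE c d : omega (W a c) (J *m W b d) =
    \sum_L \sum_M Ii L M * (F W L a c * F W M b d + F Z L a c * F Z M b d).
  rewrite omega_gamma // !JW !linearN /= !mulNmx opprK mxE !bilinear_entry.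
  rewrite -big_split; apply: eq_bigr => L _ /=; rewrite -big_split; apply: eq_bigr => M _ /=.
  by rewrite -mulrDr !mxE.
transitivity (\sum_c \sum_d invmx G d c * omega (W a c) (J *m W b d)).
  apply: eq_bigr => c _; rewrite /raise2 mulmx_sumr -omega_sumr.
  by congr (omega _ _); apply: eq_bigr => d _; rewrite -scalemxAr.
under eq_bigr do under eq_bigr do rewrite omegaE mulr_sum2r.
rewrite exchange_big2; apply: eq_bigr => L _; apply: eq_bigr => M _.
rewrite !mulmx_trmx2_entry -big_split mulr_sumr; apply: eq_bigr => c _.
by rewrite -big_split mulr_sumr; apply: eq_bigr => d _ /=; ring.
Qed.

Lemma energy_momentum_omega o (W : form2 R (nv + nv)) a b :
  lorentzian_form G -> antisym W -> (forall a b, hodge2 o G W a b = - (J *m W a b)) ->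
  2 * (\sum_L \sum_M Ii L M * \sum_c Fpart W a c L * Fpart (raise2 G W) b c M)
  - 2^-1 * G a b *
    (\sum_L \sum_M Ii L M *
       \sum_c \sum_d Fpart W c d L * Fpart (raise_both G W) c d M)
  = \sum_c omega (W a c) (J *m raise2 G W b c).
Proof.
move=> [_ [P [P_unit P_frame]]] antiW hodgeW.
pose t L M := (F W L *m (invmx G)^T *m (F W M)^T) a b.
pose q L M := \sum_c \sum_d F W L c d * (invmx G *m F W M *m (invmx G)^T) c d.
have entryE (Y : 'M[R]_4) r : (Y - r *: G) a b = Y a b - r * G a b by rewrite !mxE.
have contract_raise2 L M : \sum_c Fpart W a c L * Fpart (raise2 G W) b c M = t L M.
  rewrite /t -mulmxA -trmx_mul -form2_mx_raise2 mxE.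
  by apply: eq_bigr => c _; rewrite /Fpart !mxE.
have contract_raise_both L M :
    \sum_c \sum_d Fpart W c d L * Fpart (raise_both G W) c d M = q L M.
  apply: eq_bigr => c _; apply: eq_bigr => d _.
  by rewrite -form2_mx_raise_both /Fpart !mxE.
have swap (Y : 'I_nv -> 'I_nv -> R) :
    \sum_L \sum_M Ii L M * Y M L = \sum_L \sum_M Ii L M * Y L M.
  rewrite exchange_big; apply: eq_bigr => L _; apply: eq_bigr => M _.
  by rewrite -[in LHS]Ii_sym mxE.
under [X in 2 * X]eq_bigr do under eq_bigr do rewrite contract_raise2.
under [X in _ - _ * X]eq_bigr do under eq_bigr do rewrite contract_raise_both.
rewrite (sum_omega_raise2 _ _ hodgeW).
have antiF L : (F W L)^T = - F W L := form2_mx_antisym _ antiW.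
under [RHS]eq_bigr do under eq_bigr do rewrite !form2_mx_hodge2
  (hodge_mx_contract P_unit P_frame o (antiF _) (antiF _)) entryE -/(t _ _) -/(t _ _) -/(q _ _).
transitivity (\sum_L \sum_M Ii L M * t L M + \sum_L \sum_M Ii L M * t M L
              - 2^-1 * G a b * \sum_L \sum_M Ii L M * q L M).
  by rewrite swap; ring.
rewrite mulr_sum2r -big_split -sumrB; apply: eq_bigr => L _.
by rewrite -big_split -sumrB; apply: eq_bigr => M _ /=; ring.
Qed.

End EnergyMomentum.

Theorem lemma2p15 (R : realType) (ns nv : nat)
  (U : set 'rV[R]_4) (o : bool) (Vs : set 'rV[R]_ns)
  (J : 'rV[R]_ns -> 'M[R]_(nv + nv)) (Rm Im : 'rV[R]_ns -> 'M[R]_nv)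
  (g : 'rV[R]_4 -> 'M[R]_4) (phi : 'rV[R]_4 -> 'rV[R]_ns)
  (V : 'rV[R]_4 -> form2 R (nv + nv)) :
  open U -> U !=set0 -> contractible U -> relatively_compact U ->
  open Vs ->
  taming_map Vs J ->
  em_structure Vs Rm Im ->
  (forall y, Vs y -> J y = gamma_mx (Rm y) (Im y)) ->
  lorentzian_metric U g ->
  (forall i, smooth_on U (fun x => phi x 0 i)) ->
  (forall x, U x -> Vs (phi x)) ->
  (forall a b A, smooth_on U (fun x => V x a b A 0)) ->
  (forall x, U x -> antisym (V x)) ->
  (forall x, U x -> forall a b,
      hodge2 o (g x) (V x) a b = - (J (phi x) *m V x a b)) ->
  forall x, U x -> forall a b : 'I_4,
    let I := Im (phi x) in
    let F := Fpart (V x) in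
    let Fup := Fpart (raise2 (g x) (V x)) in
    let Fupup := Fpart (raise_both (g x) (V x)) in
    2 * (\sum_(L < nv) \sum_(S < nv) I L S * \sum_(c < 4) F a c L * Fup b c S)
    - 2^-1 * g x a b *
      (\sum_(L < nv) \sum_(S < nv) I L S *
         \sum_(c < 4) \sum_(d < 4) F c d L * Fupup c d S)
    = \sum_(c < 4) omega (V x a c) (J (phi x) *m raise2 (g x) (V x) b c).
Proof.
(* The identity is pointwise. *)
move=> _ _ _ _ _ _ [_ [_ em_Vs]] J_gamma [_ g_lorentzian] _ phi_Vs _ V_anti V_hodge x Ux a b.
have Vs_phi := phi_Vs x Ux; have [R_sym [I_sym I_posdef]] := em_Vs _ Vs_phi.
have hodgeV := V_hodge x Ux; rewrite J_gamma // in hodgeV *.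
exact: (energy_momentum_omega R_sym I_sym (pos_def_unitmx I_posdef) a b
          (g_lorentzian x Ux) (V_anti x Ux) hodgeV).
Qed.
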